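(* Let $(A,\mu,\alpha_A,\varepsilon)$ be a commutative color Hom-associative algebra and $(\mathfrak g,[\cdot,\cdot]_{\mathfrak g},\alpha_{\mathfrak g},\varepsilon)$ a color Hom-Lie algebra (same $\Gamma$ and $\varepsilon$). (i) The $\Gamma$-graded space $\mathfrak g\otimes A$ with $\alpha(x\otimes a)=\alpha_{\mathfrak g}(x)\otimes\alpha_A(a)$ and $[x\otimes a,y\otimes b]=\varepsilon(a,y)[x,y]_{\mathfrak g}\otimes\mu(a,b)$ (homogeneous $x,y\in\mathfrak g$, $a,b\in A$) is a color Hom-Lie algebra. (ii) If $B_A$ is an associative scalar product on $A$ and $B_{\mathfrak g}$ is an invariant scalar product on $\mathfrak g$, then $(\mathfrak g\otimes A,[\cdot,\cdot],\alpha,\varepsilon,B)$ is a quadratic color Hom-Lie algebra, where $B(x\otimes a,y\otimes b)=\varepsilon(a,y)B_{\mathfrak g}(x,y)B_A(a,b)$.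
   Context: $\mathbb K$ is a field of characteristic zero and $\Gamma$ an abelian group. A bicharacter is a map $\varepsilon:\Gamma\times\Gamma\to\mathbb K\setminus\{0\}$ with $\varepsilon(a,b)\varepsilon(b,a)=1$, $\varepsilon(a,b+c)=\varepsilon(a,b)\varepsilon(a,c)$, $\varepsilon(a+b,c)=\varepsilon(a,c)\varepsilon(b,c)$; for homogeneous elements $\varepsilon(x,y)=\varepsilon(\deg x,\deg y)$. The tensor product is graded by $(V\otimes W)_\delta=\sum_{\gamma+\gamma'=\delta}V_\gamma\otimes W_{\gamma'}$. A color Hom-Lie algebra $(\mathfrak g,[\cdot,\cdot],\alpha,\varepsilon)$: $\Gamma$-graded space, even bilinear bracket, even linear $\alpha$, with $[x,y]=-\varepsilon(x,y)[y,x]$ and $\varepsilon(z,x)[\alpha(x),[y,z]]+\varepsilon(x,y)[\alpha(y),[z,x]]+\varepsilon(y,z)[\alpha(z),[x,y]]=0$. A color Hom-associative algebra $(A,\mu,\alpha_A,\varepsilon)$: $\Gamma$-graded space with even bilinear $\mu$ and even linear $\alpha_A$, $\mu(\alpha_A(a),\mu(b,c))=\mu(\mu(a,b),\alpha_A(c))$; commutative means $\mu(a,b)=\varepsilon(a,b)\mu(b,a)$. An associative scalar product on $A$ is a nondegenerate $\varepsilon$-symmetric ($B_A(a,b)=\varepsilon(a,b)B_A(b,a)$) bilinear form with $B_A(\mu(a,b),c)=B_A(a,\mu(b,c))$ and $B_A(\alpha_A(a),b)=B_A(a,\alpha_A(b))$. An invariant scalar product on $\mathfrak g$ is a nondegenerate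 $\varepsilon$-symmetric bilinear form with $B_{\mathfrak g}([x,y],z)=B_{\mathfrak g}(x,[y,z])$ and $B_{\mathfrak g}(\alpha_{\mathfrak g}(x),y)=B_{\mathfrak g}(x,\alpha_{\mathfrak g}(y))$. A quadratic color Hom-Lie algebra is one equipped with such a form. *)

From HB Require Import structures.
From mathcomp Require Import all_boot all_order all_algebra.
Set Implicit Arguments. Unset Strict Implicit. Unset Printing Implicit Defensive.
Import Order.TTheory GRing.Theory Num.Theory.
Local Open Scope ring_scope.

Section Defs.
Variables (K : fieldType) (Γ : zmodType).

Definition bicharacter (eps : Γ -> Γ -> K) : Prop :=
  (forall a b, eps a b != 0) /\
  (forall a b, eps a b * eps b a = 1) /\
  (forall a b c, eps a (b + c) = eps a b * eps a c) /\
  (forall a b c, eps (a + b) c = eps a c * eps b c).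

Definition is_subspace (V : lmodType K) (S : V -> Prop) : Prop :=
  S 0 /\ (forall x y, S x -> S y -> S (x + y)) /\
  (forall (c : K) x, S x -> S (c *: x)).

(* D g is the homogeneous component V_g; V is the direct sum of the V_g *)
Definition graded (V : lmodType K) (D : Γ -> V -> Prop) : Prop :=
  (forall g, is_subspace (D g)) /\
  (forall v : V, exists s : seq (Γ * V),
      (forall p, p \in s -> D p.1 p.2) /\ v = \sum_(p <- s) p.2) /\
  (forall s : seq (Γ * V), uniq (map fst s) ->
      (forall p, p \in s -> D p.1 p.2) -> \sum_(p <- s) p.2 = 0 ->
      forall p, p \in s -> p.2 = 0).

Definition lin_map (V W : lmodType K) (f : V -> W) : Prop :=
  forall (c : K) x y, f (c *: x + y) = c *: f x + f y.

Definition bilin_map (U V W : lmodType K) (f : U -> V -> W) : Prop :=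
  (forall (c : K) x1 x2 y, f (c *: x1 + x2) y = c *: f x1 y + f x2 y) /\
  (forall (c : K) x y1 y2, f x (c *: y1 + y2) = c *: f x y1 + f x y2).

Definition bilin_form (V : lmodType K) (B : V -> V -> K) : Prop :=
  (forall (c : K) x1 x2 y, B (c *: x1 + x2) y = c * B x1 y + B x2 y) /\
  (forall (c : K) x y1 y2, B x (c *: y1 + y2) = c * B x y1 + B x y2).

Definition even_bilin (V : lmodType K) (D : Γ -> V -> Prop) (f : V -> V -> V) :=
  forall a b x y, D a x -> D b y -> D (a + b) (f x y).

Definition even_lin (V : lmodType K) (D : Γ -> V -> Prop) (f : V -> V) :=
  forall a x, D a x -> D a (f x).

Definition color_hom_lie (V : lmodType K) (D : Γ -> V -> Prop)
  (br : V -> V -> V) (al : V -> V) (eps : Γ -> Γ -> K) : Prop :=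
  graded D /\ bilin_map br /\ lin_map al /\ even_bilin D br /\ even_lin D al /\
  (forall a b x y, D a x -> D b y -> br x y = - (eps a b *: br y x)) /\
  (forall a b c x y z, D a x -> D b y -> D c z ->
     eps c a *: br (al x) (br y z) + eps a b *: br (al y) (br z x)
       + eps b c *: br (al z) (br x y) = 0).

Definition comm_color_hom_assoc (V : lmodType K) (D : Γ -> V -> Prop)
  (mu : V -> V -> V) (al : V -> V) (eps : Γ -> Γ -> K) : Prop :=
  graded D /\ bilin_map mu /\ lin_map al /\ even_bilin D mu /\ even_lin D al /\
  (forall x y z, mu (al x) (mu y z) = mu (mu x y) (al z)) /\
  (forall a b x y, D a x -> D b y -> mu x y = eps a b *: mu y x).

Definition nondegenerate (V : lmodType K) (B : V -> V -> K) : Prop :=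
  forall x, (forall y, B x y = 0) -> x = 0.

Definition eps_symmetric (V : lmodType K) (D : Γ -> V -> Prop)
  (eps : Γ -> Γ -> K) (B : V -> V -> K) : Prop :=
  forall a b x y, D a x -> D b y -> B x y = eps a b * B y x.

Definition assoc_scalar_product (V : lmodType K) (D : Γ -> V -> Prop)
  (mu : V -> V -> V) (al : V -> V) (eps : Γ -> Γ -> K) (B : V -> V -> K) :=
  bilin_form B /\ nondegenerate B /\ eps_symmetric D eps B /\
  (forall x y z, B (mu x y) z = B x (mu y z)) /\
  (forall x y, B (al x) y = B x (al y)).

Definition invariant_scalar_product (V : lmodType K) (D : Γ -> V -> Prop)
  (br : V -> V -> V) (al : V -> V) (eps : Γ -> Γ -> K) (B : V -> V -> K) :=
  bilin_form B /\ nondegenerate B /\ eps_symmetric D eps B /\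
  (forall x y z, B (br x y) z = B x (br y z)) /\
  (forall x y, B (al x) y = B x (al y)).

Definition quadratic_color_hom_lie (V : lmodType K) (D : Γ -> V -> Prop)
  (br : V -> V -> V) (al : V -> V) (eps : Γ -> Γ -> K) (B : V -> V -> K) :=
  color_hom_lie D br al eps /\ invariant_scalar_product D br al eps B.

Definition tensor_product (V W T : lmodType K) (t : V -> W -> T) : Prop :=
  bilin_map t /\
  forall (U : lmodType K) (f : V -> W -> U), bilin_map f ->
    (exists h : T -> U, lin_map h /\ forall x y, h (t x y) = f x y) /\
    (forall h1 h2 : T -> U, lin_map h1 -> lin_map h2 ->
       (forall x y, h1 (t x y) = h2 (t x y)) -> forall z, h1 z = h2 z).

(* (V (x) W)_d = sum_{g + g' = d} V_g (x) W_g' : finite sums of pure tensors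
   x (x) y with x in V_g, y in W_(d - g) *)
Definition tensor_grading (V W T : lmodType K) (D1 : Γ -> V -> Prop)
  (D2 : Γ -> W -> Prop) (t : V -> W -> T) : Γ -> T -> Prop :=
  fun d z => exists s : seq ((Γ * V) * W),
    (forall p, p \in s -> D1 p.1.1 p.1.2 /\ D2 (d - p.1.1) p.2) /\
    z = \sum_(p <- s) t p.1.2 p.2.

End Defs.

From Pilot Require Import Defs.
From HB Require Import structures.
From mathcomp Require Import all_boot all_order all_algebra.
From mathcomp Require Import boolp ring.
Set Implicit Arguments. Unset Strict Implicit. Unset Printing Implicit Defensive.
Import GRing.Theory.
Local Open Scope ring_scope.

(* Every element of [g (x) A] is a finite sum of tensors [x (x) a] with homogeneous
   factors: by the universal property, a subspace containing all pure tensors is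
   everything.  All axioms are additive in each argument, so they reduce to such
   tensors, where they become the corresponding axiom of [g] or [A] (commutativity
   and Hom-associativity bring the three products of the Jacobi identity to a
   common form) times a product of values of [eps], equal by the bicharacter laws.
   The grading of [g (x) A] is direct because the homogeneous projections of [g]
   and [A] induce, again by the universal property, those of [g (x) A]. *)

Lemma bilin_mapP (K : fieldType) (U V W : lmodType K) (f : U -> V -> W) :
  bilin_map f -> bilinear_for *:%R *:%R f.
Proof. by case=> fl fr; split=> [y c x1 x2 | x c y1 y2]; [apply: fl | apply: fr]. Qed.

Lemma bilin_formP (K : fieldType) (V : lmodType K) (B : V -> V -> K) :
  bilin_form B -> bilinear_for *%R *%R B.
Proof. by case=> Bl Br; split=> [y c x1 x2 | x c y1 y2]; [apply: Bl | apply: Br]. Qed.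

Lemma big_uniq_supp (R : zmodType) (I : eqType) (F : I -> R) (r1 r2 : seq I) :
  uniq r1 -> uniq r2 -> (forall i, F i != 0 -> i \in r1) ->
  (forall i, F i != 0 -> i \in r2) -> \sum_(i <- r1) F i = \sum_(i <- r2) F i.
Proof.
move=> u1 u2 s1 s2.
have supp r : \sum_(i <- r) F i = \sum_(i <- [seq i <- r | F i != 0]) F i.
  rewrite big_filter (bigID (fun i => F i != 0)) /=.
  by rewrite [X in _ + X]big1 ?addr0 // => i /negPn/eqP.
rewrite (supp r1) (supp r2); apply/perm_big/uniq_perm; rewrite ?filter_uniq //.
move=> i; rewrite !mem_filter; case Fi: (F i != 0) => //=.
by rewrite (s1 _ Fi) (s2 _ Fi).
Qed.

Lemma homogeneous_sum_eq0 (K : fieldType) (Γ : zmodType) (V : lmodType K)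
    (D : Γ -> V -> Prop) :
  (forall d, exists h : {linear V -> V},
     forall e v, D e v -> h v = if e == d then v else 0) ->
  forall s : seq (Γ * V), uniq (map fst s) -> (forall p, p \in s -> D p.1 p.2) ->
  \sum_(p <- s) p.2 = 0 -> forall p, p \in s -> p.2 = 0.
Proof.
move=> projD s us Ds s0 p ps; have [h hD] := projD p.1.
have := congr1 h s0; rewrite linear0 linear_sum.
rewrite (eq_big_seq (fun q => if q.1 == p.1 then q.2 else 0)); last by move=> q /Ds /hD.
rewrite -big_mkcond (big_rem _ ps) /= eqxx big1_seq => [|q /andP [/eqP qp qs]].
  by rewrite addr0.
have /= /andP [/negP []] : uniq (map fst (p :: rem p s)).
  by rewrite -(perm_uniq (perm_map fst (perm_to_rem ps))).
by rewrite -qp map_f.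
Qed.

Section Bicharacter.
Variables (K : fieldType) (Γ : zmodType) (eps : Γ -> Γ -> K) (He : bicharacter eps).

Lemma bichar_neq0 a b : eps a b != 0. Proof. by case: He. Qed.
Lemma bicharDl a b c : eps (a + b) c = eps a c * eps b c.
Proof. by case: He => _ [_ []]. Qed.
Lemma bicharDr a b c : eps a (b + c) = eps a b * eps a c.
Proof. by case: He => _ [_ []]. Qed.
Lemma bicharV a b : eps b a = (eps a b)^-1.
Proof.
case: He => _ [epsC _]; apply: (mulfI (bichar_neq0 a b)).
by rewrite epsC divff ?bichar_neq0.
Qed.

End Bicharacter.

(* [eps b a] becomes [(eps a b)^-1], so that [field] only sees independent atoms. *)
Ltac bichar_field He :=
  let eps := match type of He with bicharacter ?e => e end in
  rewrite ?(bicharDl He) ?(bicharDr He);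
  repeat match goal with
  | |- context [eps ?a ?b] =>
      lazymatch goal with
      | |- context [eps b a] =>
          tryif constr_eq a b then fail else rewrite (bicharV He a b)
      end
  end;
  by field; rewrite ?(bichar_neq0 He).

Section GradedSpace.
Variables (K : fieldType) (Γ : zmodType) (V : lmodType K) (D : Γ -> V -> Prop).
Hypothesis HD : graded D.

Lemma graded0 g : D g 0. Proof. by case: HD => /(_ g) []. Qed.
Lemma gradedD g x y : D g x -> D g y -> D g (x + y).
Proof. by case: HD => /(_ g) [_ []]; auto. Qed.
Lemma gradedZ g c x : D g x -> D g (c *: x). Proof. by case: HD => /(_ g) [_ []]; auto. Qed.
Lemma gradedB g x y : D g x -> D g y -> D g (x - y).
Proof. by move=> Dx Dy; rewrite -scaleN1r; apply/gradedD/gradedZ. Qed.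
Lemma graded_sum g I (r : seq I) (P : pred I) (F : I -> V) :
  (forall i, P i -> D g (F i)) -> D g (\sum_(i <- r | P i) F i).
Proof. by move=> DF; apply: big_ind; [apply: graded0 | apply: gradedD |]. Qed.

Definition homogeneous (s : seq (Γ * V)) := forall p, p \in s -> D p.1 p.2.
Definition component (s : seq (Γ * V)) g := \sum_(p <- s | p.1 == g) p.2.

Lemma component_homog s g : homogeneous s -> D g (component s g).
Proof.
move=> Ds; rewrite /component big_seq_cond.
by apply: graded_sum => p /andP [ps /eqP <-]; apply: Ds.
Qed.

Lemma component_eq0 s g : g \notin map fst s -> component s g = 0.
Proof.
move=> gs; rewrite /component big1_seq // => p /andP [/eqP pg /(map_f fst)].
by rewrite pg (negPf gs).
Qed.

Lemma sum_components s (L : seq Γ) : uniq L -> {subset map fst s <= L} ->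
  \sum_(p <- s) p.2 = \sum_(g <- L) component s g.
Proof.
move=> uL sL; rewrite /component (exchange_big_dep predT) //=; apply: eq_big_seq => p ps.
rewrite (eq_bigl (pred1 p.1)) => [|g]; last exact: eq_sym.
by rewrite -big_filter filter_pred1_uniq ?big_seq1 ?sL ?map_f.
Qed.

Lemma component_unique s s' g : homogeneous s -> homogeneous s' ->
  \sum_(p <- s) p.2 = \sum_(p <- s') p.2 -> component s g = component s' g.
Proof.
move=> Ds Ds' ss'.
set L := undup (map fst (s ++ s')).
have sL q : q \in map fst s -> q \in L by rewrite mem_undup map_cat mem_cat => ->.
have s'L q : q \in map fst s' -> q \in L by rewrite mem_undup map_cat mem_cat orbC => ->.
set u := [seq (h, component s h - component s' h) | h <- L].
have uL : map fst u = L by rewrite -map_comp map_id.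
have Du : homogeneous u.
  by move=> p /mapP [h _ ->]; apply: gradedB; apply: component_homog.
have u0 : \sum_(p <- u) p.2 = 0.
  rewrite big_map sumrB -(sum_components (undup_uniq _) sL).
  by rewrite -(sum_components (undup_uniq _) s'L) ss' subrr.
case gL: (g \in L); last first.
  by rewrite !component_eq0 ?(contraFN (sL g) gL) ?(contraFN (s'L g) gL).
case: HD => _ [_ /(_ u)]; rewrite uL => /(_ (undup_uniq _) Du u0).
by move=> /(_ (g, _) (map_f _ gL)) /eqP; rewrite subr_eq0 => /eqP.
Qed.

Lemma sum_scaled_homogeneous_eq0 (f : Γ -> K) s : homogeneous s -> (forall g, f g != 0) ->
  \sum_(p <- s) f p.1 *: p.2 = 0 -> \sum_(p <- s) p.2 = 0.
Proof.
move=> Ds f0 fs0; set s' := [seq (p.1, f p.1 *: p.2) | p <- s].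
have Ds' : homogeneous s' by move=> p /mapP [q /Ds Dq ->]; apply: gradedZ.
have comp0 g : component s g = 0.
  have /(component_unique g Ds') : homogeneous [::] by move=> p; rewrite in_nil.
  rewrite big_map fs0 big_nil /component big_nil big_map /= => /(_ erefl) /eqP.
  rewrite (eq_bigr (fun p => f g *: p.2)) => [|p /eqP -> //].
  by rewrite -scaler_sumr scaler_eq0 (negPf (f0 g)) => /eqP.
rewrite (sum_components (undup_uniq (map fst s))) ?big1 // => g.
by rewrite mem_undup.
Qed.

Lemma decomposition_exists v : exists s, homogeneous s /\ v = \sum_(p <- s) p.2.
Proof. by case: HD => _ []. Qed.

Definition decomposition v := proj1_sig (cid (decomposition_exists v)).

Lemma decomposition_homog v : homogeneous (decomposition v).
Proof. by rewrite /decomposition; case: cid => s []. Qed.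

Lemma decompositionE v : v = \sum_(p <- decomposition v) p.2.
Proof. by rewrite /decomposition; case: cid => s []. Qed.

Definition proj g v := component (decomposition v) g.
Definition support v := undup (map fst (decomposition v)).

Lemma projE s v g : homogeneous s -> v = \sum_(p <- s) p.2 -> proj g v = component s g.
Proof.
move=> Ds e; apply: component_unique => //; first exact: decomposition_homog.
by rewrite -decompositionE.
Qed.

Lemma proj_is_linear g : linear (proj g).
Proof.
move=> c x y; set s := [seq (p.1, c *: p.2) | p <- decomposition x] ++ decomposition y.
have Ds : homogeneous s.
  move=> p; rewrite mem_cat => /orP [/mapP [q qx ->] | py].
    exact/gradedZ/(decomposition_homog qx).
  exact: decomposition_homog py.
by rewrite (@projE s) /component ?big_cat ?big_map /= -?scaler_sumr -?decompositionE.
Qed.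

HB.instance Definition _ g := GRing.isLinear.Build K V V *:%R (proj g) (proj_is_linear g).

Lemma proj_id g h v : D h v -> proj g v = if h == g then v else 0.
Proof.
move=> Dv; rewrite (@projE [:: (h, v)]) ?big_seq1 // => [|p /[!inE] /eqP -> //].
by rewrite /component big_cons big_nil /=; case: eqP; rewrite ?addr0.
Qed.

Lemma support_proj g v : proj g v != 0 -> g \in support v.
Proof.
move=> ng; rewrite mem_undup; apply: contraNT ng => /component_eq0.
by rewrite /proj => ->.
Qed.

End GradedSpace.

Section TensorProduct.
Variables (K : fieldType) (V W T : lmodType K) (t : V -> W -> T) (Ht : tensor_product t).

Lemma tensor_lift (U : lmodType K) (f : V -> W -> U) : bilin_map f ->
  exists h : {linear T -> U}, forall x y, h (t x y) = f x y.
Proof.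
move=> fb; have [[h [hl ht]] _] := Ht.2 _ f fb.
by exists (HB.pack_for {linear T -> U} h (GRing.isLinear.Build K T U *:%R h hl)).
Qed.

Section TensorSpan.
Variables (S : T -> Prop) (HS : is_subspace S) (St : forall x y, S (t x y)).

Definition subspace_pred z := `[< S z >].

Lemma subspace_pred_closed : subsemimod_closed subspace_pred.
Proof.
case: HS => S0 [SD SZ]; split; first split.
- exact/asboolP.
- by move=> x y /asboolP Sx /asboolP Sy; apply/asboolP; apply: SD.
- by move=> c x /asboolP Sx; apply/asboolP; apply: SZ.
Qed.

HB.instance Definition _ :=
  GRing.isSubmodClosed.Build K T subspace_pred subspace_pred_closed.
Record subspace := Subspace { subspace_val : T; _ : subspace_pred subspace_val }.
HB.instance Definition _ := [isSub for subspace_val].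
HB.instance Definition _ := [Choice of subspace by <:].
HB.instance Definition _ := [SubChoice_isSubLmodule of subspace by <:].

(* [t] factors through [subspace] by a linear [h]; the composite of [h] with the
   inclusion agrees with [id] on pure tensors, hence everywhere. *)
Lemma tensor_product_span z : S z.
Proof.
pose f x y : subspace := Subspace (asboolT (St x y)).
have fb : bilin_map f.
  by case: Ht => -[tl tr] _; split=> * ; apply: val_inj; rewrite /= ?tl ?tr.
have [h ht] := tensor_lift fb.
have <- : subspace_val (h z) = z.
  apply: ((Ht.2 T t Ht.1).2 (subspace_val \o h) id) => // [c x y | x y] /=.
  - by rewrite linearP.
  - by rewrite ht.
by case: (h z) => v Sv; apply/asboolP.
Qed.

End TensorSpan.
End TensorProduct.

Section DualFamily.
Variables (K : fieldType) (V : lmodType K) (B : V -> V -> K) (HB : bilin_form B).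
Variables (P : V -> Prop) (HP : forall x, (forall y, P y -> B x y = 0) -> x = 0).

HB.instance Definition _ := bilinear_isBilinear.Build K V V K *%R *%R B (bilin_formP HB).

Definition dual_expand (s : seq (V * V)) x := \sum_(p <- s) B x p.1 *: p.2.

Definition dual_adjoin (s : seq (V * V)) y e :=
  [seq (p.1, p.2 - (B p.2 y / B e y) *: e) | p <- s] ++ [:: (y, (B e y)^-1 *: e)].

Lemma dual_expand_adjoin s x y e : B e y != 0 ->
  dual_expand (dual_adjoin s y e) x
  = dual_expand s x + (B (x - dual_expand s x) y / B e y) *: e.
Proof.
move=> ney; rewrite /dual_expand /dual_adjoin big_cat big_map big_seq1 /=.
under eq_bigr do rewrite scalerBr scalerA.
rewrite sumrB -scaler_suml scalerA -addrA [- _ + _]addrC -scalerBl linearBl linear_sumlz.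
congr (_ + (_ *: _)); rewrite mulrBl mulr_suml; congr (_ - _).
by apply: eq_bigr => p _; rewrite linearZl_LR mulrA.
Qed.

(* A Gram-Schmidt-like induction: a new vector whose expansion is wrong is
   corrected by adjoining a partner [y] that pairs nontrivially with the error. *)
Lemma dual_family (xs : seq V) : exists s : seq (V * V),
  (forall p, p \in s -> P p.1) /\ forall x, x \in xs -> dual_expand s x = x.
Proof.
elim: xs => [|x0 xs [s [Ps Hs]]]; first by exists [::].
set e := x0 - dual_expand s x0.
have [e0|ne0] := eqVneq e 0.
  exists s; split=> // x /predU1P [-> | /Hs //].
  by apply/eqP; rewrite eq_sym -subr_eq0 -/e e0.
have [y Py ney] : exists2 y, P y & B e y != 0.
  case: (pselect (exists2 y, P y & B e y != 0)) => // nE; case/eqP: ne0.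
  by apply: HP => y Py; apply/eqP/negPn/negP => ney; apply: nE; exists y.
exists (dual_adjoin s y e).
split=> [p | x /predU1P [-> | /Hs sx]]; rewrite ?dual_expand_adjoin //.
- by rewrite mem_cat => /orP [/mapP [q /Ps Pq ->] | /[!inE] /eqP ->].
- by rewrite -/e divff // scale1r /e addrC subrK.
- by rewrite sx subrr linear0l mul0r scale0r addr0.
Qed.

End DualFamily.

Lemma addrACA3 (M : nmodType) (a1 a2 b1 b2 c1 c2 : M) :
  a1 + a2 + (b1 + b2) + (c1 + c2) = a1 + b1 + c1 + (a2 + b2 + c2).
Proof. by rewrite [a1 + a2 + _]addrACA addrACA. Qed.

Section TensorHomLie.
Variables (K : fieldType) (Γ : zmodType) (eps : Γ -> Γ -> K)
  (A : lmodType K) (DA : Γ -> A -> Prop) (mu : A -> A -> A) (alA : A -> A)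
  (g : lmodType K) (Dg : Γ -> g -> Prop) (brg : g -> g -> g) (alg : g -> g)
  (T : lmodType K) (t : g -> A -> T) (br : T -> T -> T) (al : T -> T).
Hypotheses (He : bicharacter eps) (HA : comm_color_hom_assoc DA mu alA eps)
  (Hg : color_hom_lie Dg brg alg eps) (Ht : tensor_product t)
  (Hbr : bilin_map br) (Hal : lin_map al).
Hypothesis br_tensor : forall (gx ga gy gb : Γ) x a y b,
  Dg gx x -> DA ga a -> Dg gy y -> DA gb b ->
  br (t x a) (t y b) = eps ga gy *: t (brg x y) (mu a b).
Hypothesis al_tensor : forall x a, al (t x a) = t (alg x) (alA a).

Let DA_graded : graded DA. Proof. by case: HA. Qed.
Let mu_bilin : bilin_map mu. Proof. by case: HA => _ []. Qed.
Let alA_lin : lin_map alA. Proof. by case: HA => _ [_ []]. Qed.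
Let mu_even : even_bilin DA mu. Proof. by case: HA => _ [_ [_ []]]. Qed.
Let alA_even : even_lin DA alA. Proof. by case: HA => _ [_ [_ [_ []]]]. Qed.
Let mu_hom_assoc x y z : mu (alA x) (mu y z) = mu (mu x y) (alA z).
Proof. by case: HA => _ [_ [_ [_ [_ []]]]]. Qed.
Let mu_comm a b x y : DA a x -> DA b y -> mu x y = eps a b *: mu y x.
Proof. by case: HA => _ [_ [_ [_ [_ [_ ]]]]]; apply. Qed.
Let Dg_graded : graded Dg. Proof. by case: Hg. Qed.
Let brg_bilin : bilin_map brg. Proof. by case: Hg => _ []. Qed.
Let brg_even : even_bilin Dg brg. Proof. by case: Hg => _ [_ [_ []]]. Qed.
Let alg_even : even_lin Dg alg. Proof. by case: Hg => _ [_ [_ [_ []]]]. Qed.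
Let brg_skew a b x y : Dg a x -> Dg b y -> brg x y = - (eps a b *: brg y x).
Proof. by case: Hg => _ [_ [_ [_ [_ [+ _]]]]]; apply. Qed.
Let brg_jacobi a b c x y z : Dg a x -> Dg b y -> Dg c z ->
  eps c a *: brg (alg x) (brg y z) + eps a b *: brg (alg y) (brg z x)
    + eps b c *: brg (alg z) (brg x y) = 0.
Proof. by case: Hg => _ [_ [_ [_ [_ [_ ]]]]]; apply. Qed.

HB.instance Definition _ :=
  bilinear_isBilinear.Build K A A A *:%R *:%R mu (bilin_mapP mu_bilin).
HB.instance Definition _ :=
  bilinear_isBilinear.Build K g g g *:%R *:%R brg (bilin_mapP brg_bilin).
HB.instance Definition _ := bilinear_isBilinear.Build K g A T *:%R *:%R t (bilin_mapP Ht.1).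
HB.instance Definition _ := bilinear_isBilinear.Build K T T T *:%R *:%R br (bilin_mapP Hbr).
HB.instance Definition _ := GRing.isLinear.Build K A A *:%R alA alA_lin.
HB.instance Definition _ := GRing.isLinear.Build K T T *:%R al Hal.

Local Notation TG := (tensor_grading Dg DA t).
Local Notation projg := (proj Dg_graded).
Local Notation projA := (proj DA_graded).
Local Notation supportg := (support Dg_graded).

Lemma tensor_grading0 d : TG d 0.
Proof. by exists [::]; rewrite big_nil. Qed.

Lemma tensor_gradingD d z w : TG d z -> TG d w -> TG d (z + w).
Proof.
move=> [s [Ds ->]] [s' [Ds' ->]]; exists (s ++ s'); rewrite big_cat; split=> // p.
by rewrite mem_cat => /orP [/Ds | /Ds'].
Qed.

Lemma tensor_gradingZ d c z : TG d z -> TG d (c *: z).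
Proof.
move=> [s [Ds ->]]; exists [seq ((p.1.1, c *: p.1.2), p.2) | p <- s]; split.
  by move=> p /mapP [q /Ds [Dq Dq'] ->]; split=> //; apply: gradedZ.
by rewrite big_map scaler_sumr; apply: eq_bigr => p _; rewrite linearZl_LR.
Qed.

Lemma tensor_grading_tensor j h x a : Dg j x -> DA h a -> TG (j + h) (t x a).
Proof.
move=> Dx Da; exists [:: ((j, x), a)]; rewrite big_seq1; split=> // p /[!inE] /eqP -> /=.
by rewrite addrC addKr.
Qed.

Lemma tensor_grading_ind d (P : T -> Prop) : P 0 -> (forall u v, P u -> P v -> P (u + v)) ->
  (forall j h x a, j + h = d -> Dg j x -> DA h a -> P (t x a)) -> forall z, TG d z -> P z.
Proof.
move=> P0 PD Pt z [s [Ds ->]]; rewrite big_seq; apply: big_ind => // p /Ds [Dx Da].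
by apply: (Pt _ _ _ _ _ Dx Da); rewrite subrKC.
Qed.

Lemma tensor_homog_sum z : exists L : seq ((Γ * g) * (Γ * A)),
  (forall q, q \in L -> Dg q.1.1 q.1.2 /\ DA q.2.1 q.2.2) /\
  z = \sum_(q <- L) t q.1.2 q.2.2.
Proof.
pose S z := exists L : seq ((Γ * g) * (Γ * A)),
  (forall q, q \in L -> Dg q.1.1 q.1.2 /\ DA q.2.1 q.2.2) /\
  z = \sum_(q <- L) t q.1.2 q.2.2.
apply: (@tensor_product_span _ _ _ _ _ Ht S).
  split; first by exists [::]; rewrite big_nil.
  split=> [z1 z2 [L1 [D1 ->]] [L2 [D2 ->]] | c z1 [L [DL ->]]].
    exists (L1 ++ L2); rewrite big_cat; split=> // q.
    by rewrite mem_cat => /orP [/D1 | /D2].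
  exists [seq ((q.1.1, c *: q.1.2), q.2) | q <- L]; rewrite big_map scaler_sumr; split.
    by move=> _ /mapP [q /DL [Dx Da] ->]; split=> //; apply: gradedZ.
  by apply: eq_bigr => q _; rewrite linearZl_LR.
move=> x a.
exists [seq (p, q) | p <- decomposition Dg_graded x, q <- decomposition DA_graded a].
split; first by move=> _ /allpairsP [[p q] [/= px qa ->]]; split;
  [exact: decomposition_homog px | exact: decomposition_homog qa].
rewrite big_allpairs {1}(decompositionE Dg_graded x) {1}(decompositionE DA_graded a).
by rewrite linear_sumlz; apply: eq_bigr => p _; rewrite linear_sumr.
Qed.

Lemma tensor_ind (P : T -> Prop) : P 0 -> (forall u v, P u -> P v -> P (u + v)) ->
  (forall j h x a, Dg j x -> DA h a -> P (t x a)) -> forall z, P z.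
Proof.
move=> P0 PD Pt z; have [L [DL ->]] := tensor_homog_sum z.
by rewrite big_seq; apply: big_ind => // q /DL [Dx Da]; apply: Pt Dx Da.
Qed.

Lemma tensor_homog_decomposition z :
  exists s : seq (Γ * T), (forall p, p \in s -> TG p.1 p.2) /\ z = \sum_(p <- s) p.2.
Proof.
have [L [DL ->]] := tensor_homog_sum z.
exists [seq (q.1.1 + q.2.1, t q.1.2 q.2.2) | q <- L]; rewrite big_map; split=> //.
by move=> _ /mapP [q /DL [Dx Da] ->]; apply: tensor_grading_tensor.
Qed.

(* The degree-[d] component of [x (x) a]; summing over [support x] rather than
   over all of [Γ] makes this a finite sum. *)
Definition tensor_part d x a :=
  \sum_(j <- supportg x) t (projg j x) (projA (d - j) a).

Lemma tensor_partE d x a J : uniq J -> (forall j, projg j x != 0 -> j \in J) ->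
  tensor_part d x a = \sum_(j <- J) t (projg j x) (projA (d - j) a).
Proof.
move=> uJ sJ.
have nz j : t (projg j x) (projA (d - j) a) != 0 -> projg j x != 0.
  by apply: contraNneq => ->; rewrite linear0l.
apply: big_uniq_supp => // [|j /nz/support_proj //|j /nz/sJ //].
exact: undup_uniq.
Qed.

Lemma tensor_part_bilinear d : bilin_map (tensor_part d).
Proof.
split=> [c x1 x2 a | c x a1 a2]; last first.
  rewrite /tensor_part scaler_sumr -big_split; apply: eq_bigr => j _ /=.
  by rewrite linearP linearDr linearZr_LR.
set J := undup (supportg x1 ++ supportg x2 ++ supportg (c *: x1 + x2)).
have sJ x : x \in [:: x1; x2; c *: x1 + x2] -> forall j, projg j x != 0 -> j \in J.
  rewrite !inE => xs j /support_proj; rewrite /J mem_undup !mem_cat.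
  by case/or3P: xs => /eqP -> ->; rewrite ?orbT.
rewrite !(@tensor_partE _ _ _ J) ?undup_uniq //; try by apply: sJ; rewrite !inE eqxx ?orbT.
rewrite scaler_sumr -big_split; apply: eq_bigr => j _ /=.
by rewrite linearP linearDl linearZl_LR.
Qed.

Lemma tensor_part_tensor d j h x a : Dg j x -> DA h a ->
  tensor_part d x a = if j + h == d then t x a else 0.
Proof.
move=> Dx Da; rewrite (@tensor_partE d x a [:: j]) // => [|i].
  rewrite big_seq1 (proj_id _ j Dx) eqxx (proj_id _ (d - j) Da).
  rewrite [h == _]eq_sym subr_eq [h + j]addrC eq_sym.
  by case: ifP; rewrite ?linear0r.
by rewrite (proj_id _ i Dx); case: (eqVneq j i) => [<- | _]; rewrite ?inE ?eqxx.
Qed.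

Lemma tensor_grading_proj d : exists h : {linear T -> T},
  forall e z, TG e z -> h z = if e == d then z else 0.
Proof.
have [h ht] := tensor_lift Ht (tensor_part_bilinear d); exists h => e z.
elim/tensor_grading_ind => [|u v hu hv|j k x a <- Dx Da].
- by rewrite linear0; case: ifP.
- by rewrite linearD hu hv; case: ifP; rewrite ?addr0.
- by rewrite ht (tensor_part_tensor _ Dx Da).
Qed.

Lemma tensor_grading_graded : graded TG.
Proof.
split=> [d | ]; first by split; [|split=> *]; [apply: tensor_grading0 |
  apply: tensor_gradingD | apply: tensor_gradingZ].
split; [exact: tensor_homog_decomposition | exact/homogeneous_sum_eq0/tensor_grading_proj].
Qed.

Lemma tensor_grading_br a b z w : TG a z -> TG b w -> TG (a + b) (br z w).
Proof.
move=> Dz Dw.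
elim/tensor_grading_ind: z / Dz => [|u v Du Dv|j h x y <- Dx Dy].
- by rewrite linear0l; apply: tensor_grading0.
- by rewrite linearDl; apply: tensor_gradingD.
elim/tensor_grading_ind: w / Dw => [|u v Du Dv|j' h' x' y' <- Dx' Dy'].
- by rewrite linear0r; apply: tensor_grading0.
- by rewrite linearDr; apply: tensor_gradingD.
rewrite (br_tensor Dx Dy Dx' Dy') addrACA; apply/tensor_gradingZ/tensor_grading_tensor.
- exact: brg_even.
- exact: mu_even.
Qed.

Lemma tensor_grading_al a z : TG a z -> TG a (al z).
Proof.
elim/tensor_grading_ind => [|u v Du Dv|j h x y <- Dx Dy].
- by rewrite raddf0; apply: tensor_grading0.
- by rewrite raddfD; apply: tensor_gradingD.
by rewrite al_tensor; apply: tensor_grading_tensor; [apply: alg_even | apply: alA_even].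
Qed.

Lemma tensor_br_skew a b z w : TG a z -> TG b w -> br z w = - (eps a b *: br w z).
Proof.
move=> Dz Dw.
elim/tensor_grading_ind: z / Dz => [|u v hu hv|j h x y <- Dx Dy].
- by rewrite linear0l linear0r scaler0 oppr0.
- by rewrite linearDl linearDr /= hu hv scalerDr opprD.
elim/tensor_grading_ind: w / Dw => [|u v hu hv|j' h' x' y' <- Dx' Dy'].
- by rewrite linear0l linear0r scaler0 oppr0.
- by rewrite linearDl linearDr /= hu hv scalerDr opprD.
rewrite (br_tensor Dx Dy Dx' Dy') (br_tensor Dx' Dy' Dx Dy).
rewrite (brg_skew Dx' Dx) (mu_comm Dy' Dy).
rewrite linearNl linearZl_LR linearZr_LR !scalerN opprK !scalerA; congr (_ *: _).
bichar_field He.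
Qed.

(* By Hom-associativity and commutativity all three products of [a1], [a2], [a3]
   are multiples of [P], so the left side is [l] times the Jacobi sum of [g]
   tensored with [P]. *)
Lemma tensor_jacobi_pure j1 h1 j2 h2 j3 h3 x1 a1 x2 a2 x3 a3 :
  Dg j1 x1 -> DA h1 a1 -> Dg j2 x2 -> DA h2 a2 -> Dg j3 x3 -> DA h3 a3 ->
  eps (j3 + h3) (j1 + h1) *: br (al (t x1 a1)) (br (t x2 a2) (t x3 a3))
  + eps (j1 + h1) (j2 + h2) *: br (al (t x2 a2)) (br (t x3 a3) (t x1 a1))
  + eps (j2 + h2) (j3 + h3) *: br (al (t x3 a3)) (br (t x1 a1) (t x2 a2)) = 0.
Proof.
move=> D1 E1 D2 E2 D3 E3.
rewrite !al_tensor (br_tensor D2 E2 D3 E3) (br_tensor D3 E3 D1 E1) (br_tensor D1 E1 D2 E2).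
rewrite !linearZr_LR /=.
rewrite (br_tensor (alg_even D1) (alA_even E1) (brg_even D2 D3) (mu_even E2 E3)).
rewrite (br_tensor (alg_even D2) (alA_even E2) (brg_even D3 D1) (mu_even E3 E1)).
rewrite (br_tensor (alg_even D3) (alA_even E3) (brg_even D1 D2) (mu_even E1 E2)).
set P := mu (mu a1 a2) (alA a3).
have -> : mu (alA a1) (mu a2 a3) = P by rewrite mu_hom_assoc.
have -> : mu (alA a2) (mu a3 a1) = eps (h2 + h3) h1 *: P.
  by rewrite mu_hom_assoc (mu_comm (mu_even E2 E3) (alA_even E1)) mu_hom_assoc.
have -> : mu (alA a3) (mu a1 a2) = eps h3 (h1 + h2) *: P.
  by rewrite (mu_comm (alA_even E3) (mu_even E1 E2)).
have jacP := congr1 (t^~ P) (brg_jacobi D1 D2 D3).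
rewrite /= !linearDl !linearZl_LR linear0l in jacP.
rewrite !linearZr_LR !scalerA.
pose l := eps (j3 + h3) (j1 + h1) * eps h2 j3 * eps h1 (j2 + j3) / eps j3 j1.
rewrite -(scaler0 _ l) -jacP !scalerDr !scalerA.
by congr (_ *: _ + _ *: _ + _ *: _); rewrite /l; bichar_field He.
Qed.

Lemma tensor_br_jacobi a b c z w u : TG a z -> TG b w -> TG c u ->
  eps c a *: br (al z) (br w u) + eps a b *: br (al w) (br u z)
    + eps b c *: br (al u) (br z w) = 0.
Proof.
move=> Dz Dw Du.
elim/tensor_grading_ind: z / Dz => [|z1 z2 IH1 IH2|j1 h1 x1 a1 <- D1 E1].
- by rewrite raddf0 !(linear0l, linear0r, scaler0, addr0).
- by rewrite raddfD !(linearDl, linearDr) /= !scalerDr addrACA3 IH1 IH2 addr0.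
elim/tensor_grading_ind: w / Dw => [|w1 w2 IH1 IH2|j2 h2 x2 a2 <- D2 E2].
- by rewrite raddf0 !(linear0l, linear0r, scaler0, addr0).
- by rewrite raddfD !(linearDl, linearDr) /= !scalerDr addrACA3 IH1 IH2 addr0.
elim/tensor_grading_ind: u / Du => [|u1 u2 IH1 IH2|j3 h3 x3 a3 <- D3 E3].
- by rewrite raddf0 !(linear0l, linear0r, scaler0, addr0).
- by rewrite raddfD !(linearDl, linearDr) /= !scalerDr addrACA3 IH1 IH2 addr0.
exact: tensor_jacobi_pure.
Qed.

Lemma tensor_color_hom_lie : color_hom_lie TG br al eps.
Proof.
split; first exact: tensor_grading_graded.
do 2!split=> //; split; first exact: tensor_grading_br.
split; first exact: tensor_grading_al.
split; [exact: tensor_br_skew | exact: tensor_br_jacobi].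
Qed.

Section Quadratic.
Variables (BA : A -> A -> K) (Bg : g -> g -> K) (B : T -> T -> K).
Hypotheses (HBA : assoc_scalar_product DA mu alA eps BA)
  (HBg : invariant_scalar_product Dg brg alg eps Bg) (HB : bilin_form B).
Hypothesis B_tensor : forall (gx ga gy gb : Γ) x a y b,
  Dg gx x -> DA ga a -> Dg gy y -> DA gb b ->
  B (t x a) (t y b) = eps ga gy * Bg x y * BA a b.

Let BA_bilin : bilin_form BA. Proof. by case: HBA. Qed.
Let BA_nondeg : Defs.nondegenerate BA. Proof. by case: HBA => _ []. Qed.
Let BA_sym : eps_symmetric DA eps BA. Proof. by case: HBA => _ [_ []]. Qed.
Let BA_assoc x y z : BA (mu x y) z = BA x (mu y z).
Proof. by case: HBA => _ [_ [_ []]]. Qed.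
Let BA_alpha x y : BA (alA x) y = BA x (alA y). Proof. by case: HBA => _ [_ [_ []]]. Qed.
Let Bg_bilin : bilin_form Bg. Proof. by case: HBg. Qed.
Let Bg_nondeg : Defs.nondegenerate Bg. Proof. by case: HBg => _ []. Qed.
Let Bg_sym : eps_symmetric Dg eps Bg. Proof. by case: HBg => _ [_ []]. Qed.
Let Bg_invariant x y z : Bg (brg x y) z = Bg x (brg y z).
Proof. by case: HBg => _ [_ [_ []]]. Qed.
Let Bg_alpha x y : Bg (alg x) y = Bg x (alg y). Proof. by case: HBg => _ [_ [_ []]]. Qed.

HB.instance Definition _ :=
  bilinear_isBilinear.Build K A A K *%R *%R BA (bilin_formP BA_bilin).
HB.instance Definition _ :=
  bilinear_isBilinear.Build K g g K *%R *%R Bg (bilin_formP Bg_bilin).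
HB.instance Definition _ := bilinear_isBilinear.Build K T T K *%R *%R B (bilin_formP HB).

Lemma B_tensor_homog j h k x a y b : Dg j x -> DA h a -> Dg k y ->
  B (t x a) (t y b) = eps h k * Bg x y * BA a b.
Proof.
move=> Dx Da Dy; rewrite (decompositionE DA_graded b) linear_sumr /= linear_sumr /=.
rewrite linear_sumr mulr_sumr; apply: eq_big_seq => p pb.
exact: B_tensor Dx Da Dy (decomposition_homog pb).
Qed.

Lemma tensor_form_sym : eps_symmetric TG eps B.
Proof.
move=> a b z w Dz Dw.
elim/tensor_grading_ind: z / Dz => [|u v IHu IHv|j h x y <- Dx Dy].
- by rewrite linear0l linear0r mulr0.
- by rewrite linearDl linearDr /= IHu IHv mulrDr.
elim/tensor_grading_ind: w / Dw => [|u v IHu IHv|j' h' x' y' <- Dx' Dy'].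
- by rewrite linear0l linear0r mulr0.
- by rewrite linearDl linearDr /= IHu IHv mulrDr.
rewrite (B_tensor Dx Dy Dx' Dy') (B_tensor Dx' Dy' Dx Dy) (Bg_sym Dx Dx') (BA_sym Dy Dy').
bichar_field He.
Qed.

Lemma tensor_form_invariant z w u : B (br z w) u = B z (br w u).
Proof.
elim/tensor_ind: z => [|z1 z2 IH1 IH2|j1 h1 x1 a1 D1 E1].
- by rewrite !linear0l.
- by rewrite !linearDl /= IH1 IH2.
elim/tensor_ind: w => [|w1 w2 IH1 IH2|j2 h2 x2 a2 D2 E2].
- by rewrite !(linear0l, linear0r).
- by rewrite !(linearDl, linearDr) /= IH1 IH2.
elim/tensor_ind: u => [|u1 u2 IH1 IH2|j3 h3 x3 a3 D3 E3].
- by rewrite !linear0r.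
- by rewrite !linearDr /= IH1 IH2.
rewrite (br_tensor D1 E1 D2 E2) (br_tensor D2 E2 D3 E3) linearZl_LR linearZr_LR /=.
rewrite (B_tensor (brg_even D1 D2) (mu_even E1 E2) D3 E3).
rewrite (B_tensor D1 E1 (brg_even D2 D3) (mu_even E2 E3)) Bg_invariant BA_assoc.
bichar_field He.
Qed.

Lemma tensor_form_alpha z w : B (al z) w = B z (al w).
Proof.
elim/tensor_ind: z => [|z1 z2 IH1 IH2|j1 h1 x1 a1 D1 E1].
- by rewrite raddf0 !linear0l.
- by rewrite raddfD !linearDl /= IH1 IH2.
elim/tensor_ind: w => [|w1 w2 IH1 IH2|j2 h2 x2 a2 D2 E2].
- by rewrite raddf0 !linear0r.
- by rewrite raddfD !linearDr /= IH1 IH2.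
rewrite !al_tensor (B_tensor (alg_even D1) (alA_even E1) D2 E2).
by rewrite (B_tensor D1 E1 (alg_even D2) (alA_even E2)) Bg_alpha BA_alpha.
Qed.

(* Write [z] as a sum of [t x_q a_q] and expand the [x_q] in a finite dual family
   [(y_p, e_p)] of [Bg]: [z = \sum_p t e_p S_p].  Pairing [z] with [t y_p b]
   kills a sign-twisted copy of [S_p], whence [S_p = 0]. *)
Lemma tensor_form_nondegenerate : Defs.nondegenerate B.
Proof.
move=> z Bz0; have [L [DL zE]] := tensor_homog_sum z.
have Bg_sep x : (forall y, (exists k, Dg k y) -> Bg x y = 0) -> x = 0.
  move=> Hx; apply: Bg_nondeg => y; rewrite (decompositionE Dg_graded y) linear_sumr.
  rewrite big1_seq // => p /andP [_ py]; apply: Hx.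
  by exists p.1; apply: decomposition_homog py.
have [s [Ps Hs]] := dual_family Bg_bilin Bg_sep [seq q.1.2 | q <- L].
have -> : z = \sum_(p <- s) t p.2 (\sum_(q <- L) Bg q.1.2 p.1 *: q.2.2).
  under eq_bigr do rewrite linear_sumr; rewrite zE exchange_big /=.
  apply: eq_big_seq => q qL; rewrite -{1}(Hs q.1.2 (map_f _ qL)) linear_sumlz.
  by apply: eq_bigr => p _; rewrite linearZl_LR linearZr_LR.
rewrite big1_seq // => p /andP [_ ps]; have [k Dy] := Ps p ps.
suff -> : \sum_(q <- L) Bg q.1.2 p.1 *: q.2.2 = 0 by rewrite linear0r.
pose sp := [seq (q.2.1, Bg q.1.2 p.1 *: q.2.2) | q <- L].
have := @sum_scaled_homogeneous_eq0 _ _ _ _ DA_graded (fun h => eps h k) sp.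
rewrite !big_map; apply=> [_ /mapP [q /DL [_ Da] ->] | h |]; first exact: gradedZ.
  exact: bichar_neq0.
apply: BA_nondeg => b; rewrite -[RHS](Bz0 (t p.1 b)) zE linear_sumlz linear_sumlz.
apply: eq_big_seq => q /DL [Dx Da] /=.
by rewrite !linearZl_LR (B_tensor_homog _ Dx Da Dy); apply: mulrA.
Qed.

Lemma tensor_quadratic_color_hom_lie : quadratic_color_hom_lie TG br al eps B.
Proof.
split; first exact: tensor_color_hom_lie.
do 2!split=> //; first exact: tensor_form_nondegenerate.
split; first exact: tensor_form_sym.
split; [exact: tensor_form_invariant | exact: tensor_form_alpha].
Qed.

End Quadratic.
End TensorHomLie.

Unset Implicit Arguments. Set Strict Implicit. Set Printing Implicit Defensive.

Theorem mainTheorem6 (K : fieldType) (Γ : zmodType) (eps : Γ -> Γ -> K)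
  (A : lmodType K) (DA : Γ -> A -> Prop) (mu : A -> A -> A) (alA : A -> A)
  (g : lmodType K) (Dg : Γ -> g -> Prop) (brg : g -> g -> g) (alg : g -> g)
  (T : lmodType K) (t : g -> A -> T)
  (br : T -> T -> T) (al : T -> T) :
  [pchar K] =i pred0 ->
  bicharacter eps ->
  comm_color_hom_assoc DA mu alA eps ->
  color_hom_lie Dg brg alg eps ->
  tensor_product t ->
  bilin_map br ->
  (forall (gx ga gy gb : Γ) x a y b, Dg gx x -> DA ga a -> Dg gy y -> DA gb b ->
     br (t x a) (t y b) = eps ga gy *: t (brg x y) (mu a b)) ->
  lin_map al ->
  (forall x a, al (t x a) = t (alg x) (alA a)) ->
  color_hom_lie (tensor_grading Dg DA t) br al eps /\
  (forall (BA : A -> A -> K) (Bg : g -> g -> K) (B : T -> T -> K),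
     assoc_scalar_product DA mu alA eps BA ->
     invariant_scalar_product Dg brg alg eps Bg ->
     bilin_form B ->
     (forall (gx ga gy gb : Γ) x a y b, Dg gx x -> DA ga a -> Dg gy y -> DA gb b ->
        B (t x a) (t y b) = eps ga gy * Bg x y * BA a b) ->
     quadratic_color_hom_lie (tensor_grading Dg DA t) br al eps B).
Proof.
move=> _ He HA Hg Ht Hbr br_tensor Hal al_tensor; split.
  exact: tensor_color_hom_lie He HA Hg Ht Hbr Hal br_tensor al_tensor.
move=> BA Bg B HBA HBg HB B_tensor.
exact: (tensor_quadratic_color_hom_lie He HA Hg Ht Hbr Hal br_tensor al_tensor
  HBA HBg HB B_tensor).
Qed.
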